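(* Let $q$ be an odd prime power, $s \ge 2$, and let $E,F\subset\mathbb{F}_q^s$ satisfy $(\#E)(\#F) \ge 900q^s$. Then \[ \nu(0) \le \frac{21}{30} (\# E) (\# F). \]
   Context: $\mathbb{F}_q$ is the finite field with $q$ elements, $q$ odd. For $\mathbf{x}\in\mathbb{F}_q^s$, $|\mathbf{x}|^2=\sum_i x_i^2$. $\nu(0)=\#\{(\mathbf{x},\mathbf{y})\in E\times F: |\mathbf{x}-\mathbf{y}|^2=0\}$. *)

From HB Require Import structures.
From mathcomp Require Import all_boot all_order all_algebra all_field.
Set Implicit Arguments. Unset Strict Implicit. Unset Printing Implicit Defensive.
Import GRing.Theory.
Local Open Scope ring_scope.

Definition sqnorm (F : finFieldType) (s : nat) (x : 'rV[F]_s) : F :=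
  \sum_(i < s) x 0 i ^+ 2.

Definition nu0 (F : finFieldType) (s : nat) (E G : {set 'rV[F]_s}) : nat :=
  #|[set p : 'rV[F]_s * 'rV[F]_s |
      [&& p.1 \in E, p.2 \in G & sqnorm (p.1 - p.2) == 0]]|.

(* Fix a nontrivial additive character chi of K = F_q and put
   S(t) = sum_{x in E, y in F} chi (t |x - y|^2).  Orthogonality of chi gives
   q nu(0) = sum_t S(t), and S(0) = #E #F.  For t <> 0, expanding
   |x - y|^2 = |x|^2 + |y|^2 - 2 x.y (with 2 <> 0 as q is odd) writes S(t) as a
   sum over x in E of unimodular factors times the character transform of a
   unimodular function supported on F, so Cauchy-Schwarz and Parseval give
   |S(t)|^2 <= #E #F q^s <= (#E #F / 30)^2.  Hence 30 q nu(0) <= (30 + q) #E #F,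
   and q >= 2 yields the bound. *)

From mathcomp Require Import all_boot all_order all_algebra all_field.
From mathcomp Require Import ring zify.

Set Implicit Arguments.
Unset Strict Implicit.
Unset Printing Implicit Defensive.

Import Order.TTheory GRing.Theory Num.Theory.
Local Open Scope ring_scope.

Lemma Fp_val_lt p (x : 'F_p) : prime p -> (x < p)%N.
Proof. by move=> p_pr; case: x => x /=; rewrite Fp_cast. Qed.

Lemma Fp_val_add p (x y : 'F_p) : prime p -> val (x + y) = ((x + y) %% p)%N.
Proof. by move=> p_pr /=; move: (x + y)%N => n; rewrite Fp_cast. Qed.

Lemma Fp_additive_char p : prime p -> exists psi : 'F_p -> algC,
  [/\ {morph psi : x y / x + y >-> x * y}, forall x, `|psi x| = 1
    & forall x, psi x = 1 -> x = 0].
Proof.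
move=> p_pr; have [z z_prim] := C_prim_root_exists (prime_gt0 p_pr).
exists (fun x : 'F_p => z ^+ x); split=> [x y | x | x /eqP].
- by rewrite Fp_val_add // prim_expr_mod // exprD.
- have : `|z| ^+ p == 1 by rewrite -normrX prim_expr_order // normr1.
  by rewrite pexpr_eq1 ?prime_gt0 // normrX => /eqP->; rewrite expr1n.
- rewrite -(expr0 z) (eq_prim_root_expr z_prim) mod0n modn_small ?Fp_val_lt //.
  by move=> x0; apply/val_inj/eqP.
Qed.

Lemma exists_coord_neq0 (F : fieldType) (vT : vectType F) (v : vT) :
  v != 0 -> exists i, coord (vbasis fullv) i v != 0.
Proof.
move=> v0; apply/existsP; apply: contraNT v0 => /existsPn coord0; apply/eqP.
rewrite (coord_basis (vbasisP fullv) (memvf v)) big1 // => i _.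
by rewrite (eqP (negPn (coord0 i))) scale0r.
Qed.

Lemma exists_additive_char (K : finFieldType) : exists chi : K -> algC,
  [/\ {morph chi : a b / a + b >-> a * b}, forall a, `|chi a| = 1 & chi 1 != 1].
Proof.
have [p p_pr pcharKp] := finPcharP K.
have [psi [psiD norm_psi psi_eq1]] := Fp_additive_char p_pr.
have [i coord1] := exists_coord_neq0 (oner_neq0 (pPrimeCharType pcharKp)).
pose L (a : pPrimeCharType pcharKp) := coord (vbasis fullv) i a.
exists (fun a => psi (L a)); split=> [a b | a |].
- by rewrite /L linearD psiD.
- exact: norm_psi.
- by apply: contra coord1 => /eqP /psi_eq1 /eqP.
Qed.

Lemma sqr_sum_le_card_sum_sqr (R : numDomainType) (T : finType) (A : {pred T})
    (r : T -> R) :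
  (forall i, r i \is Num.real) ->
  (\sum_(i in A) r i) ^+ 2 <= #|A|%:R * \sum_(i in A) r i ^+ 2.
Proof.
move=> r_real.
have sum_sqr_diff : \sum_(i in A) \sum_(j in A) (r i - r j) ^+ 2 =
    (#|A|%:R * \sum_(i in A) r i ^+ 2 - (\sum_(i in A) r i) ^+ 2) *+ 2.
  under eq_bigr do under eq_bigr do rewrite sqrrB.
  under eq_bigr do rewrite big_split /= sumrB sumr_const sumrMnl -mulr_sumr.
  rewrite big_split /= sumrB !sumrMnl sumr_const -mulr_suml -expr2.
  move: (\sum_(i in A) r i ^+ 2) (\sum_(i in A) r i) => a b.
  by rewrite mulrnBl mulr_natl addrAC -mulr2n.
rewrite -subr_ge0 -(pmulrn_lge0 _ (isT : (0 < 2)%N)) -sum_sqr_diff.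
by do 2!apply: sumr_ge0 => ? _; rewrite -real_normK ?rpredB // exprn_ge0.
Qed.

Section AdditiveCharacter.

Variables (K : finFieldType) (chi : K -> algC).
Hypothesis chiD : {morph chi : a b / a + b >-> a * b}.
Hypothesis norm_chi : forall a, `|chi a| = 1.
Hypothesis chi1 : chi 1 != 1.

Lemma chi_neq0 a : chi a != 0.
Proof. by rewrite -normr_eq0 norm_chi oner_eq0. Qed.

Lemma chi0 : chi 0 = 1.
Proof. by apply: (mulfI (chi_neq0 0)); rewrite -chiD !addr0 mulr1. Qed.

Lemma chiN a : chi (- a) = (chi a)^*.
Proof.
by apply: (mulfI (chi_neq0 a)); rewrite -chiD subrr chi0 -normCK norm_chi expr1n.
Qed.

(* Translating the summation variable by u multiplies the sum by chi (L u). *)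
Lemma sum_chi_morph_eq0 (V : finZmodType) (L : V -> K) u :
  {morph L : x y / x + y} -> chi (L u) != 1 -> \sum_x chi (L x) = 0.
Proof.
move=> LD chiLu.
have sum_shift : \sum_x chi (L x) = chi (L u) * \sum_x chi (L x).
  rewrite {1}(reindex_inj (addIr u)) mulr_sumr; apply: eq_bigr => x _.
  by rewrite LD chiD mulrC.
apply/eqP; have : (1 - chi (L u)) * \sum_x chi (L x) == 0.
  by rewrite mulrBl mul1r -sum_shift subrr.
by rewrite mulf_eq0 subr_eq0 eq_sym (negbTE chiLu).
Qed.

Lemma sum_chi_mul a : \sum_t chi (t * a) = if a == 0 then #|K|%:R else 0.
Proof.
have [-> | a0] := eqVneq.
  by under eq_bigr do rewrite mulr0 chi0; rewrite sumr_const cardT.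
apply: (@sum_chi_morph_eq0 _ (fun t => t * a) a^-1) => [x y|].
  exact: mulrDl.
by rewrite mulVf.
Qed.

Variable s : nat.
Hypothesis two_neq0 : 2%:R != 0 :> K.
Implicit Types (x y w : 'rV[K]_s) (E F : {set 'rV[K]_s}).

Definition dot x y : K := \sum_i x 0 i * y 0 i.

Lemma dotDl x y w : dot (x + y) w = dot x w + dot y w.
Proof. by rewrite /dot -big_split; apply: eq_bigr => i _; rewrite mxE mulrDl. Qed.

Lemma dotBr x y w : dot x (y - w) = dot x y - dot x w.
Proof. by rewrite /dot -sumrB; apply: eq_bigr => i _; rewrite !mxE mulrBr. Qed.

Lemma dotx0 x : dot x 0 = 0.
Proof. by rewrite /dot big1 // => i _; rewrite mxE mulr0. Qed.

Lemma sqnormB x y : sqnorm (x - y) = sqnorm x + sqnorm y - (dot x y) *+ 2.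
Proof.
rewrite /sqnorm /dot -sumrMnl -big_split -sumrB; apply: eq_bigr => i _.
by rewrite !mxE sqrrB addrAC.
Qed.

Lemma sum_chi_dot c w : c != 0 ->
  \sum_x chi (c * dot x w) = if w == 0 then (#|K| ^ s)%:R else 0.
Proof.
move=> c0; have [-> | w0] := eqVneq.
  by under eq_bigr do rewrite dotx0 mulr0 chi0; rewrite sumr_const card_mx mul1n.
have [i wi0] : exists i, w 0 i != 0.
  apply/existsP; apply: contraNT w0 => /existsPn w_eq0.
  by apply/eqP/rowP => i; rewrite mxE; apply/eqP/negPn.
pose u : 'rV[K]_s := \row_j (if j == i then (c * w 0 i)^-1 else 0).
apply: (@sum_chi_morph_eq0 _ (fun x => c * dot x w) u) => [x y|].
  by rewrite dotDl mulrDr.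
have -> : dot u w = (c * w 0 i)^-1 * w 0 i.
  rewrite /dot (bigD1 i) //= big1 ?addr0 => [|j ji]; first by rewrite mxE eqxx.
  by rewrite mxE (negbTE ji) mul0r.
by rewrite invfM !mulrA mulfV // mul1r mulVf.
Qed.

Lemma parseval_chi_dot c (A : {set 'rV[K]_s}) (f : 'rV[K]_s -> algC) :
  c != 0 ->
  \sum_x `|\sum_(y in A) f y * chi (c * dot x y)| ^+ 2
    = (#|K| ^ s)%:R * \sum_(y in A) `|f y| ^+ 2.
Proof.
move=> c0.
transitivity (\sum_(y in A) \sum_(y' in A)
    f y * (f y')^* * \sum_x chi (c * dot x (y - y'))).
  under eq_bigr do rewrite normCK rmorph_sum mulr_suml.
  rewrite exchange_big; apply: eq_bigr => y _.
  under eq_bigr do rewrite mulr_sumr; rewrite exchange_big.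
  apply: eq_bigr => y' _; rewrite mulr_sumr; apply: eq_bigr => x _.
  by rewrite rmorphM dotBr mulrBr chiD chiN mulrACA.
rewrite mulr_sumr; apply: eq_bigr => y yA.
rewrite (bigD1 y) //= [X in _ + X]big1 => [|y' /andP[_ y'y]].
  by rewrite sum_chi_dot // subrr eqxx addr0 -normCK mulrC.
by rewrite sum_chi_dot // subr_eq0 eq_sym (negbTE y'y) mulr0.
Qed.

Definition sqdist_char_sum E F t : algC :=
  \sum_(x in E) \sum_(y in F) chi (t * sqnorm (x - y)).

Lemma sqdist_char_sum0 E F : sqdist_char_sum E F 0 = (#|E| * #|F|)%:R.
Proof.
rewrite /sqdist_char_sum natrM mulr_natl -sumr_const; apply: eq_bigr => x _.
by under eq_bigr do rewrite mul0r chi0; rewrite sumr_const.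
Qed.

Lemma sqdist_char_sum_factor E F t :
  sqdist_char_sum E F t = \sum_(x in E) chi (t * sqnorm x) *
    \sum_(y in F) chi (t * sqnorm y) * chi (- (t *+ 2) * dot x y).
Proof.
apply: eq_bigr => x _; rewrite mulr_sumr; apply: eq_bigr => y _.
by rewrite mulrA -!chiD sqnormB; congr chi; ring.
Qed.

Lemma sqr_norm_sqdist_char_sum_le E F t : t != 0 ->
  `|sqdist_char_sum E F t| ^+ 2 <= (#|E| * #|F| * #|K| ^ s)%:R.
Proof.
move=> t0; have c0 : - (t *+ 2) != 0 by rewrite oppr_eq0 -mulr_natr mulf_neq0.
pose B x := \sum_(y in F) chi (t * sqnorm y) * chi (- (t *+ 2) * dot x y).
have norm_le_sum_B : `|sqdist_char_sum E F t| <= \sum_(x in E) `|B x|.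
  rewrite sqdist_char_sum_factor; apply: le_trans (ler_norm_sum _ _ _) _.
  by apply: ler_sum => x _; rewrite normrM norm_chi mul1r.
have sum_sqr_norm_B : \sum_x `|B x| ^+ 2 = (#|F| * #|K| ^ s)%:R.
  rewrite parseval_chi_dot //.
  by under eq_bigr do rewrite norm_chi expr1n; rewrite sumr_const natrM mulrC.
apply: le_trans (_ : (\sum_(x in E) `|B x|) ^+ 2 <= _).
  by rewrite ler_pXn2r // nnegrE ?sumr_ge0.
apply: le_trans (sqr_sum_le_card_sum_sqr _ (fun x => normr_real (B x))) _.
rewrite -mulnA natrM ler_wpM2l // -sum_sqr_norm_B [leRHS](bigID (mem E)) /=.
by rewrite lerDl sumr_ge0 // => x _; apply: exprn_ge0.
Qed.

Lemma nu0_char_sum E F : (#|K| * nu0 E F)%:R = \sum_t sqdist_char_sum E F t.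
Proof.
have nu0E : nu0 E F = (\sum_(x in E) \sum_(y in F) (sqnorm (x - y) == 0%R))%N.
  rewrite /nu0 -sum1_card pair_big_dep /= big_mkcond [RHS]big_mkcond /=.
  apply: eq_bigr => -[x y] _.
  by rewrite inE /=; case: (x \in E); case: (y \in F); case: eqP.
rewrite nu0E big_distrr natr_sum /sqdist_char_sum exchange_big.
apply: eq_bigr => x _.
rewrite big_distrr natr_sum exchange_big; apply: eq_bigr => y _.
by rewrite sum_chi_mul; case: (_ == _); rewrite /= ?muln1 ?muln0.
Qed.

Lemma norm_sqdist_char_sum_le m E F t : t != 0 ->
  (m ^ 2 * #|K| ^ s <= #|E| * #|F|)%N ->
  m%:R * `|sqdist_char_sum E F t| <= (#|E| * #|F|)%:R.
Proof.
move=> t0 large.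
rewrite -(@ler_pXn2r _ 2) ?nnegrE ?mulr_ge0 // exprMn -natrX.
apply: le_trans (_ : _ <= (m ^ 2)%:R * (#|E| * #|F| * #|K| ^ s)%:R) _.
  by rewrite ler_wpM2l // sqr_norm_sqdist_char_sum_le.
by rewrite -natrM -natrX ler_nat; nia.
Qed.

Lemma nu0_le m E F : (m ^ 2 * #|K| ^ s <= #|E| * #|F|)%N ->
  (m * (#|K| * nu0 E F) <= (m + #|K|) * (#|E| * #|F|))%N.
Proof.
move=> large; rewrite -(ler_nat algC) natrM -[(#|K| * _)%:R]normr_nat.
rewrite nu0_char_sum (bigD1 0) //= sqdist_char_sum0; set N := (#|E| * #|F|)%N.
apply: le_trans (_ : _ <= m%:R * (N%:R
    + \sum_(t | t != 0) `|sqdist_char_sum E F t|)) _.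
  rewrite ler_wpM2l // (le_trans (ler_normD _ _)) // normr_nat lerD2l.
  exact: ler_norm_sum.
rewrite mulrDr natrM natrD mulrDl lerD2l mulr_sumr.
apply: le_trans (_ : _ <= \sum_(t | t != 0) N%:R) _.
  by apply: ler_sum => t t0; apply: norm_sqdist_char_sum_le.
by rewrite sumr_const -[_ *+ #|_|]mulr_natl ler_wpM2r // ler_nat max_card.
Qed.
End AdditiveCharacter.

Lemma odd_card_two_neq0 (K : finFieldType) : odd #|K| -> 2%:R != 0 :> K.
Proof.
move=> oddK; apply/negP => two0.
have pchar2 : 2 \in [pchar K] by apply/andP.
have cardK : #|K| = (2 ^ logn 2 #|K|)%N := card_pprimeChar pchar2.
by move: oddK (finNzRing_gt1 K); rewrite cardK oddX orbF; case: logn.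
Qed.

Theorem lemma6 (K : finFieldType) (s : nat) (E F : {set 'rV[K]_s}) :
  odd #|K| -> (2 <= s)%N ->
  (#|E| * #|F| >= 900 * #|K| ^ s)%N ->
  (30 * nu0 E F <= 21 * (#|E| * #|F|))%N.
Proof.
move=> oddK _ large.
have [chi [chiD norm_chi chi1]] := exists_additive_char K.
have := nu0_le chiD norm_chi chi1 (odd_card_two_neq0 oddK) (m := 30) large.
have := finNzRing_gt1 K.
move: #|K| (nu0 E F) (#|E| * #|F|)%N => q nu N q_gt1 bound; nia.
Qed.
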